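(* Let $\vec x$ be an optimal solution of the LP $\max\{\vec w\cdot\vec x:\sum_j u_{i,j}x_j\le b_i\ \forall i,\ \vec x\in[0,1]^n\}$ and run the algorithm $\textsc{SKSP}(\alpha_1,\beta_1,\alpha_2)$ described in the context. Then for every item $j$, the event $\mathrm{ad}_{2,j}$ that $j$ is added in the second chance satisfies $\Pr[\mathrm{ad}_{2,j}]\ge\frac{x_j}{k}\alpha_2\left(1-\frac{\alpha_1x_j}{k}-\beta_1-\frac{\alpha_2}{2}\right)$.
   Context: Stochastic $k$-set packing: $n$ items; item $j$ has random weight $W_j\ge0$ and random size vector $S_j\in\{0,1\}^m$, the pairs $(W_j,S_j)$ mutually independent across $j$; $u_{i,j}=\mathbb E[S_{i,j}]$, $w_j=\mathbb E[W_j]$; $S_{i,j}=0$ a.s. outside a known set $\mathcal C(j)$ with $|\mathcal C(j)|\le k$; capacities $\vec b\in\mathbb Z_+^m$. An item $j$ is safe if every $i\in\mathcal C(j)$ has at least one unit of remaining capacity; a probed item is irrevocably added and its realization observed. Algorithm $\textsc{SKSP}(\alpha_1,\beta_1,\alpha_2)$ with $\alpha_1,\alpha_2\ge0$ and $0\le\beta_1\le\alpha_1(1-\alpha_1/2)$: First chance: generate independent Bernoulli $Y_{1,j}$ with mean $\alpha_1x_j/k$, follow a uniformly random order over $[n]$ and add $j$ iff $Y_{1,j}=1$ and $j$ is safe, where (by simulation-based attenuation, i.e. adding with a suitable extra probability) each item is added in this first chance with probability exactly $\beta_1x_j/k$. Second chance: generate independent Bernoulli $Y_{2,j}$ with mean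 $\alpha_2x_j/k$, follow an independent uniformly random order over $[n]$ and add $j$ iff $j$ is safe, $Y_{1,j}=0$ and $Y_{2,j}=1$. *)

From mathcomp Require Import all_boot all_order all_algebra all_fingroup.
Set Implicit Arguments. Unset Strict Implicit. Unset Printing Implicit Defensive.
Import Order.TTheory GRing.Theory Num.Theory.
Local Open Scope ring_scope.

(* Sample space of one run of SKSP(alpha1,beta1,alpha2).              *)
(*  - S  : realized size vectors S_j in {0,1}^m of the n items         *)
(*  - Y1 : first-chance Bernoulli coins Y_{1,j}                        *)
(*  - Z  : attenuation coins; Z (j,p) is the extra coin used when item *)
(*         j is met at position p of the first-chance order            *)
(*  - s1 : first-chance uniformly random order (s1 p = item at pos p)  *)
(*  - Y2 : second-chance Bernoulli coins Y_{2,j}                       *)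
(*  - s2 : second-chance uniformly random order                        *)
Definition outcome (n m : nat) : finType :=
  ({ffun 'I_n -> {ffun 'I_m -> bool}} * {ffun 'I_n -> bool}
   * {ffun 'I_n * 'I_n -> bool} * {perm 'I_n} * {ffun 'I_n -> bool}
   * {perm 'I_n})%type.

Section Proj.
Variables n m : nat.
Definition oS  (w : outcome n m) := w.1.1.1.1.1.
Definition oY1 (w : outcome n m) := w.1.1.1.1.2.
Definition oZ  (w : outcome n m) := w.1.1.1.2.
Definition os1 (w : outcome n m) := w.1.1.2.
Definition oY2 (w : outcome n m) := w.1.2.
Definition os2 (w : outcome n m) := w.2.
End Proj.

Definition bern (R : numFieldType) (p : R) (b : bool) : R := if b then p else 1 - p.

Definition weight (R : numFieldType) (n m : nat)
  (pS : 'I_n -> {ffun 'I_m -> bool} -> R) (p1 p2 : 'I_n -> R)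
  (q : 'I_n -> 'I_n -> R) (w : outcome n m) : R :=
  (\prod_(j < n) pS j (oS w j)) *
  (\prod_(j < n) bern (p1 j) (oY1 w j)) *
  (\prod_(jp : 'I_n * 'I_n) bern (q jp.1 jp.2) (oZ w jp)) *
  (n`!%:R)^-1 *
  (\prod_(j < n) bern (p2 j) (oY2 w j)) *
  (n`!%:R)^-1.

Definition Pr (R : numFieldType) (n m : nat)
  (pS : 'I_n -> {ffun 'I_m -> bool} -> R) (p1 p2 : 'I_n -> R)
  (q : 'I_n -> 'I_n -> R) (E : pred (outcome n m)) : R :=
  \sum_(w : outcome n m) weight pS p1 p2 q w * (E w)%:R.

(* state: remaining capacities and set of items added so far *)
Definition state (n m : nat) := ({ffun 'I_m -> nat} * {set 'I_n})%type.

Definition safe (m : nat) (Cj : {set 'I_m}) (rem : {ffun 'I_m -> nat}) : bool :=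
  [forall i in Cj, 0 < rem i]%N.

Definition consume (m : nat) (rem : {ffun 'I_m -> nat}) (s : {ffun 'I_m -> bool})
  : {ffun 'I_m -> nat} := [ffun i => (rem i - s i)%N].

Definition add_item (n m : nat) (st : state n m) (j : 'I_n) (s : {ffun 'I_m -> bool})
  : state n m := (consume st.1 s, j |: st.2).

Definition first_step (n m : nat) (C : 'I_n -> {set 'I_m}) (w : outcome n m)
  (st : state n m) (p : 'I_n) : state n m :=
  let j := os1 w p in
  if [&& oY1 w j, safe (C j) st.1 & oZ w (j, p)] then add_item st j (oS w j) else st.

Definition first_chance (n m : nat) (b : 'I_m -> nat) (C : 'I_n -> {set 'I_m})
  (w : outcome n m) : state n m :=
  foldl (first_step C w) ([ffun i => b i], set0) (enum 'I_n).

Definition second_step (n m : nat) (C : 'I_n -> {set 'I_m}) (w : outcome n m)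
  (st : state n m) (p : 'I_n) : state n m :=
  let j := os2 w p in
  if [&& safe (C j) st.1, ~~ oY1 w j & oY2 w j] then add_item st j (oS w j) else st.

Definition second_chance (n m : nat) (b : 'I_m -> nat) (C : 'I_n -> {set 'I_m})
  (w : outcome n m) : state n m :=
  foldl (second_step C w) (((first_chance b C w).1), set0) (enum 'I_n).

Definition ad1 (n m : nat) (b : 'I_m -> nat) (C : 'I_n -> {set 'I_m}) (j : 'I_n)
  : pred (outcome n m) := fun w => j \in (first_chance b C w).2.
Definition ad2 (n m : nat) (b : 'I_m -> nat) (C : 'I_n -> {set 'I_m}) (j : 'I_n)
  : pred (outcome n m) := fun w => j \in (second_chance b C w).2.

Definition umean (R : numFieldType) (n m : nat) (pS : 'I_n -> {ffun 'I_m -> bool} -> R)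
  (i : 'I_m) (j : 'I_n) : R := \sum_(s : {ffun 'I_m -> bool}) pS j s * (s i)%:R.

Definition lp_feasible (R : numFieldType) (n m : nat)
  (pS : 'I_n -> {ffun 'I_m -> bool} -> R) (b : 'I_m -> nat) (x : 'I_n -> R) : Prop :=
  (forall j, 0 <= x j <= 1) /\
  (forall i, \sum_(j < n) umean pS i j * x j <= (b i)%:R).

Definition lp_optimal (R : numFieldType) (n m : nat)
  (pS : 'I_n -> {ffun 'I_m -> bool} -> R) (b : 'I_m -> nat) (w : 'I_n -> R)
  (x : 'I_n -> R) : Prop :=
  lp_feasible pS b x /\
  (forall y, lp_feasible pS b y -> \sum_(j < n) w j * y j <= \sum_(j < n) w j * x j).

From mathcomp Require Import all_boot all_order all_algebra all_fingroup.
From mathcomp Require Import ring zify.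
Set Implicit Arguments. Unset Strict Implicit. Unset Printing Implicit Defensive.
Import Order.TTheory GRing.Theory Num.Theory.
Local Open Scope ring_scope.

(* If Y2_j = 1 and Y1_j = 0 but j is not added in the second chance, then some
   i in C(j) is exhausted when j is met in the second order: its b_i units were
   consumed by items added in the first chance (load F_i) or by items l with
   Y2_l = 1 preceding j in the second order (load G_i). Hence
     1[ad2_j] >= Y2_j (1 - Y1_j) - sum_(i in C(j)) Y2_j (F_i + G_i) / b_i.
   In expectation E[Y2_j F_i] = p2_j sum_l u_il Pr[ad1_l], since whether l is
   added in the first chance does not depend on its own size, and
   E[Y2_j G_i] <= p2_j sum_l u_il p2_l / 2, since l precedes j with probability
   1/2. With Pr[ad1_l] = beta1 x_l / k, the LP constraint sum_l u_il x_l <= b_i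
   and |C(j)| <= k give the bound. *)

Section FfunUpdate.
Variables (I : finType) (T : Type).

Definition fupd (F : {ffun I -> T}) (j : I) (t : T) : {ffun I -> T} :=
  [ffun l => if l == j then t else F l].

Lemma fupd_eq F j t : fupd F j t j = t.
Proof. by rewrite ffunE eqxx. Qed.

Lemma fupd_neq F j t l : l != j -> fupd F j t l = F l.
Proof. by rewrite ffunE => /negbTE ->. Qed.

Lemma fupdK F j t : fupd (fupd F j t) j (F j) = F.
Proof. by apply/ffunP => l; rewrite !ffunE; case: eqP => // ->. Qed.

End FfunUpdate.

Section ProductWeights.
Variable R : comPzRingType.

Lemma exchange_mulr (a a' r x y : R) : a' * x = a * y -> a' * r * x = a * r * y.
Proof. by move=> e; rewrite mulrAC e mulrAC. Qed.

Lemma exchange_mull (a a' r x y : R) : a' * x = a * y -> r * a' * x = r * a * y.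
Proof. by move=> e; rewrite -!mulrA e. Qed.

(* (u, t) |-> (upd u t, get u) is an involution of U * T that exchanges the
   weights wt u * mu t and wt (upd u t) * mu (get u). *)
Lemma sum_indep_coord (U T : finType) (wt : U -> R) (mu : T -> R)
    (get : U -> T) (upd : U -> T -> U) (g : T -> R) (h : U -> R) :
  \sum_t mu t = 1 ->
  (forall u t, wt (upd u t) * mu (get u) = wt u * mu t) ->
  (forall u t, get (upd u t) = t) ->
  (forall u t, upd (upd u t) (get u) = u) ->
  (forall u t, h (upd u t) = h u) ->
  \sum_u wt u * (g (get u) * h u) = (\sum_t mu t * g t) * \sum_u wt u * h u.
Proof.
move=> mu1 wt_upd get_upd updK h_upd.
pose swap (p : U * T) := (upd p.1 p.2, get p.1).
have swapK : involutive swap by case=> u t; rewrite /swap /= get_upd updK.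
transitivity (\sum_u \sum_t wt u * mu t * g (get u) * h u).
  apply: eq_bigr => u _; rewrite -[LHS]mulr1 -mu1 mulr_sumr.
  by apply: eq_bigr => t _; ring.
rewrite pair_bigA (reindex_inj (inv_inj swapK)) [RHS]mulrC big_distrlr pair_bigA.
apply: eq_bigr => -[u t] _ /=.
by rewrite get_upd h_upd wt_upd; ring.
Qed.

Lemma prod_fupd (I : finType) (T : Type) (mu : I -> T -> R) (F : {ffun I -> T}) j t :
  \prod_l mu l (fupd F j t l) * mu j (F j) = \prod_l mu l (F l) * mu j t.
Proof.
rewrite (bigD1 j) // [in RHS](bigD1 j) //= fupd_eq.
rewrite (eq_bigr (fun l => mu l (F l))); first by ring.
by move=> l lj; rewrite fupd_neq.
Qed.

Lemma sum_pair_mul (A B : finType) (f : A -> R) (g : B -> R) :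
  \sum_(p : A * B) f p.1 * g p.2 = (\sum_a f a) * (\sum_b g b).
Proof. by rewrite big_distrlr pair_bigA. Qed.

Lemma sum_ffun_prod1 (I J : finType) (mu : I -> J -> R) :
  (forall i, \sum_t mu i t = 1) -> \sum_(F : {ffun I -> J}) \prod_i mu i (F i) = 1.
Proof. by move=> mu1; rewrite -bigA_distr_bigA big1. Qed.

End ProductWeights.

Section Bernoulli.
Variable R : numFieldType.

Lemma bern_sum (p : R) : \sum_b bern p b = 1.
Proof. by rewrite big_bool /= addrC subrK. Qed.

Lemma bern_mean (p : R) : \sum_b bern p b * b%:R = p.
Proof. by rewrite big_bool /= mulr1 mulr0 addr0. Qed.

Lemma bern_ge0 (p : R) b : 0 <= p <= 1 -> 0 <= bern p b.
Proof. by case/andP=> p_ge0 p_le1; case: b; rewrite /= ?subr_ge0. Qed.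

Lemma sum_ffun_bern1 (I : finType) (p : I -> R) :
  \sum_(Y : {ffun I -> bool}) \prod_i bern (p i) (Y i) = 1.
Proof. exact: sum_ffun_prod1 (fun i => bern_sum (p i)). Qed.

End Bernoulli.

Section Outcomes.
Variables n m : nat.

Definition updS (w : outcome n m) j t : outcome n m :=
  (((((fupd (oS w) j t, oY1 w), oZ w), os1 w), oY2 w), os2 w).
Definition updY1 (w : outcome n m) j t : outcome n m :=
  (((((oS w, fupd (oY1 w) j t), oZ w), os1 w), oY2 w), os2 w).
Definition updY2 (w : outcome n m) j t : outcome n m :=
  (((((oS w, oY1 w), oZ w), os1 w), fupd (oY2 w) j t), os2 w).

Definition before (w : outcome n m) (a c : 'I_n) : bool :=
  ((os2 w)^-1%g a < (os2 w)^-1%g c)%N.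

End Outcomes.

Section GreedyFold.
Variables (n m : nat) (f : 'I_n -> 'I_n) (S : 'I_n -> {ffun 'I_m -> bool}).
Variable cond : state n m -> 'I_n -> bool.

Definition greedy_step (st : state n m) (p : 'I_n) : state n m :=
  if cond st p then add_item st (f p) (S (f p)) else st.

Lemma greedy_step_mono (st : state n m) (p j : 'I_n) :
  j \in st.2 -> j \in (greedy_step st p).2.
Proof. by rewrite /greedy_step; case: ifP => //= _ j_st; rewrite in_setU1 j_st orbT. Qed.

Lemma greedy_fold_mono (r : seq 'I_n) (st : state n m) (j : 'I_n) :
  j \in st.2 -> j \in (foldl greedy_step st r).2.
Proof. by elim: r st => //= p r IH st /(greedy_step_mono p); exact: IH. Qed.

Lemma greedy_fold_added (P : pred 'I_n) (r : seq 'I_n) (st : state n m) (j : 'I_n) :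
  (forall st p, cond st p -> P p) -> j \in (foldl greedy_step st r).2 ->
  j \in st.2 \/ exists2 p, p \in r & j = f p /\ P p.
Proof.
move=> condP; elim: r st => [|p r IH] st /=; first by left.
case/IH => [|[p' p'r [-> Pp']]]; last by right; exists p' => //; rewrite inE p'r orbT.
rewrite /greedy_step; case: ifP => [cond_p|_]; last by left.
rewrite /= in_setU1 => /orP[/eqP ->|]; last by left.
by right; exists p; [rewrite inE eqxx | split=> //; exact: condP cond_p].
Qed.

Definition budget (st : state n m) (i : 'I_m) : nat :=
  (st.1 i + \sum_(j in st.2) S j i)%N.

(* Only an inequality: [consume] truncates at 0, which can increase the budget. *)
Lemma leq_budget_greedy_fold (r : seq 'I_n) (st : state n m) (i : 'I_m) :
  injective f -> uniq r -> (forall p, p \in r -> f p \notin st.2) ->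
  (budget st i <= budget (foldl greedy_step st r) i)%N.
Proof.
move=> f_inj; elim: r st => //= p r IH st /andP[p_r r_uniq] fresh.
have fp_st : f p \notin st.2 by apply: fresh; rewrite inE eqxx.
apply: (@leq_trans (budget (greedy_step st p) i)).
  rewrite /greedy_step /budget; case: ifP => // _ /=.
  by rewrite big_setU1 //= ffunE addnA leq_add2r; case: (S (f p) i) => /=; lia.
apply: IH => // p' p'r; rewrite /greedy_step; case: ifP => _ /=.
  rewrite in_setU1 negb_or (inj_eq f_inj) fresh ?inE ?p'r ?orbT // andbT.
  by apply: contraNneq p_r => <-.
by apply: fresh; rewrite inE p'r orbT.
Qed.

End GreedyFold.

Lemma mem_greedy_fold_resize n m (f : 'I_n -> 'I_n) (S S' : 'I_n -> {ffun 'I_m -> bool})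
    (cond : state n m -> 'I_n -> bool) (j : 'I_n) (r : seq 'I_n) (st : state n m) :
  (forall l, l != j -> S l = S' l) ->
  (j \in (foldl (greedy_step f S cond) st r).2) =
  (j \in (foldl (greedy_step f S' cond) st r).2).
Proof.
move=> SS'.
pose related (st1 st2 : state n m) := (j \in st1.2) && (j \in st2.2) || (st1 == st2).
have related_step st1 st2 p : related st1 st2 ->
    related (greedy_step f S cond st1 p) (greedy_step f S' cond st2 p).
  case/orP => [/andP[j1 j2]|/eqP <-]; first by rewrite /related !greedy_step_mono.
  rewrite /related /greedy_step; case: ifP => _; last by rewrite eqxx orbT.
  have [->|fp_j] := eqVneq (f p) j; first by rewrite /= !in_setU1 !eqxx.
  by rewrite SS' // eqxx orbT.
have related_fold r' st1 st2 : related st1 st2 ->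
    related (foldl (greedy_step f S cond) st1 r') (foldl (greedy_step f S' cond) st2 r').
  by elim: r' st1 st2 => //= p r' IH st1 st2 /(related_step _ _ p); exact: IH.
have st_st : related st st by rewrite /related eqxx orbT.
by case/orP: (related_fold r st st st_st) => [/andP[-> ->]|/eqP ->].
Qed.

Section SecondChance.
Variables (n m : nat) (b : 'I_m -> nat) (C : 'I_n -> {set 'I_m}).

Definition cond1 (w : outcome n m) (st : state n m) (p : 'I_n) : bool :=
  [&& oY1 w (os1 w p), safe (C (os1 w p)) st.1 & oZ w (os1 w p, p)].

Definition cond2 (w : outcome n m) (st : state n m) (p : 'I_n) : bool :=
  [&& safe (C (os2 w p)) st.1, ~~ oY1 w (os2 w p) & oY2 w (os2 w p)].

Lemma first_chanceE w : first_chance b C w =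
  foldl (greedy_step (os1 w) (oS w) (cond1 w)) ([ffun i => b i], set0) (enum 'I_n).
Proof. by []. Qed.

Lemma second_chanceE w : second_chance b C w =
  foldl (greedy_step (os2 w) (oS w) (cond2 w)) ((first_chance b C w).1, set0) (enum 'I_n).
Proof. by []. Qed.

Lemma ad1_updS w l t : ad1 b C l (updS w l t) = ad1 b C l w.
Proof.
rewrite /ad1 !first_chanceE; apply: mem_greedy_fold_resize => l' l'l.
by rewrite /updS /oS /= fupd_neq.
Qed.

Definition first_load (w : outcome n m) (i : 'I_m) : nat :=
  \sum_(l in (first_chance b C w).2) oS w l i.

Definition candidate_load (w : outcome n m) (j : 'I_n) (i : 'I_m) : nat :=
  \sum_l (oS w l i && oY2 w l && before w l j).

Lemma leq_capacity_first_chance w i : (b i <= (first_chance b C w).1 i + first_load w i)%N.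
Proof.
have := leq_budget_greedy_fold (oS w) (cond1 w) (st := ([ffun i => b i], set0)) i
  (@perm_inj _ (os1 w)) (enum_uniq 'I_n) (fun p _ => negbT (in_set0 _)).
by rewrite /budget /= big_set0 ffunE addn0 -first_chanceE.
Qed.

Lemma leq_capacity_second_prefix w j i (r : seq 'I_n) : uniq r ->
    (forall p, p \in r -> (p < (os2 w)^-1%g j)%N) ->
  (b i <= (foldl (greedy_step (os2 w) (oS w) (cond2 w))
             ((first_chance b C w).1, set0) r).1 i + first_load w i + candidate_load w j i)%N.
Proof.
move=> r_uniq r_before; set mid := foldl _ _ r.
have budget_mid := leq_budget_greedy_fold (oS w) (cond2 w)
  (st := ((first_chance b C w).1, set0)) i (@perm_inj _ (os2 w)) r_uniq
  (fun p _ => negbT (in_set0 _)).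
rewrite /budget /= big_set0 addn0 -/mid in budget_mid.
have mid_candidate_load : (\sum_(l in mid.2) oS w l i <= candidate_load w j i)%N.
  rewrite [X in (X <= _)%N]big_mkcond; apply: leq_sum => l _.
  case: ifP => // l_mid.
  have cond2_Y2 st p : cond2 w st p -> oY2 w (os2 w p) by case/and3P.
  have [|[p p_r [-> Y2p]]] := greedy_fold_added cond2_Y2 l_mid.
    by rewrite in_set0.
  by rewrite Y2p /before permK r_before // !andbT; case: (oS w _ i).
apply: leq_trans (leq_capacity_first_chance w i) _.
rewrite addnAC leq_add2r (leq_trans budget_mid) // leq_add2l.
exact: mid_candidate_load.
Qed.

Lemma not_ad2_exhausted w j : oY2 w j -> ~~ oY1 w j -> ~~ ad2 b C j w ->
  exists2 i, i \in C j & (b i <= first_load w i + candidate_load w j i)%N.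
Proof.
move=> Y2j Y1j not_ad2; set p0 := (os2 w)^-1%g j; set r := take p0 (enum 'I_n).
set mid := foldl (greedy_step (os2 w) (oS w) (cond2 w)) ((first_chance b C w).1, set0) r.
have enum_split : enum 'I_n = r ++ p0 :: drop p0.+1 (enum 'I_n).
  by rewrite -{1}(cat_take_drop p0 (enum 'I_n)) (drop_nth p0) ?size_enum_ord // nth_ord_enum.
have s2p0 : os2 w p0 = j by rewrite permKV.
have /forall_inPn[i iCj] : ~~ safe (C j) mid.1.
  apply: contra not_ad2 => safe_j.
  rewrite /ad2 second_chanceE enum_split foldl_cat /= -/mid greedy_fold_mono //.
  by rewrite /greedy_step /cond2 s2p0 safe_j Y1j Y2j /= in_setU1 eqxx.
rewrite -eqn0Ngt => /eqP mid_i; exists i => //.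
have := leq_capacity_second_prefix (w := w) (j := j) i (take_uniq p0 (enum_uniq 'I_n)).
rewrite -/r -/mid mid_i add0n; apply=> p.
by rewrite /r in_take ?mem_enum // index_enum_ord.
Qed.

Lemma ad2_indicator_ge (R : numFieldType) w j : (forall i, 0 < b i)%N ->
  (oY2 w j)%:R * (1 - (oY1 w j)%:R)
    - \sum_(i in C j) (oY2 w j)%:R * (first_load w i + candidate_load w j i)%:R / (b i)%:R
  <= (ad2 b C j w)%:R :> R.
Proof.
move=> b_gt0.
have load_ge0 : 0 <= \sum_(i in C j)
    (oY2 w j)%:R * (first_load w i + candidate_load w j i)%:R / (b i)%:R :> R.
  by apply: sumr_ge0 => i _; rewrite !mulr_ge0 ?invr_ge0 ?ler0n.
have ad2_ge0 := ler0n R (ad2 b C j w).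
case Y2j: (oY2 w j) load_ge0 => load_ge0; last first.
  by rewrite mul0r sub0r (le_trans _ ad2_ge0) // oppr_le0.
case Y1j: (oY1 w j); first by rewrite subrr mulr0 sub0r (le_trans _ ad2_ge0) // oppr_le0.
case ad2j: (ad2 b C j w); first by rewrite subr0 mulr1 lerBlDr lerDl.
have [i iCj exhausted] := not_ad2_exhausted Y2j (negbT Y1j) (negbT ad2j).
rewrite subr0 mulr1 subr_le0 (bigD1 i) //= mul1r ler_wpDr ?sumr_ge0 //.
  by move=> l _; rewrite !mulr_ge0 ?invr_ge0 ?ler0n.
by rewrite ler_pdivlMr ?ltr0n // mul1r ler_nat.
Qed.

End SecondChance.

Section Expectation.
Variables (R : realFieldType) (n m : nat).
Variables (pS : 'I_n -> {ffun 'I_m -> bool} -> R) (p1 p2 : 'I_n -> R).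
Variables (q : 'I_n -> 'I_n -> R) (b : 'I_m -> nat) (C : 'I_n -> {set 'I_m}).

(* [Pr pS p1 p2 q A] is convertible to [expect (fun w => (A w)%:R)]. *)
Definition expect (f : outcome n m -> R) : R :=
  \sum_w weight pS p1 p2 q w * f w.
Local Notation E := expect.

Lemma eq_expect f g : f =1 g -> E f = E g.
Proof. by move=> fg; apply: eq_bigr => w _; rewrite fg. Qed.

Lemma expect0 : E (fun=> 0) = 0.
Proof. by rewrite /expect big1 // => w _; rewrite mulr0. Qed.

Lemma expectD f g : E (fun w => f w + g w) = E f + E g.
Proof. by rewrite /expect -big_split; apply: eq_bigr => w _; rewrite mulrDr. Qed.

Lemma expectB f g : E (fun w => f w - g w) = E f - E g.
Proof. by rewrite /expect -sumrB; apply: eq_bigr => w _; rewrite mulrBr. Qed.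

Lemma expectZ c f : E (fun w => c * f w) = c * E f.
Proof. by rewrite /expect mulr_sumr; apply: eq_bigr => w _; rewrite mulrCA. Qed.

Lemma expect_sum (I : finType) (P : pred I) (F : I -> outcome n m -> R) :
  E (fun w => \sum_(i | P i) F i w) = \sum_(i | P i) E (F i).
Proof. by rewrite /expect exchange_big; apply: eq_bigr => w _; rewrite mulr_sumr. Qed.

Lemma expect_indep_S j (g : {ffun 'I_m -> bool} -> R) (h : outcome n m -> R) :
  \sum_s pS j s = 1 -> (forall w t, h (updS w j t) = h w) ->
  E (fun w => g (oS w j) * h w) = (\sum_s pS j s * g s) * E h.
Proof.
move=> pSj1 h_upd; apply: (sum_indep_coord (upd := fun w t => updS w j t)) => //.
- by move=> w t; rewrite /weight; do 5!apply: exchange_mulr; exact: prod_fupd.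
- by move=> w t; exact: fupd_eq.
- by move=> [[[[[? ?] ?] ?] ?] ?] t; rewrite /updS /= fupdK.
Qed.

Lemma expect_indep_Y1 j (g : bool -> R) (h : outcome n m -> R) :
  (forall w t, h (updY1 w j t) = h w) ->
  E (fun w => g (oY1 w j) * h w) = (\sum_y bern (p1 j) y * g y) * E h.
Proof.
move=> h_upd; apply: (sum_indep_coord (upd := fun w t => updY1 w j t)) => //.
- exact: bern_sum.
- move=> w t; rewrite /weight /=; do 4!apply: exchange_mulr.
  by apply: exchange_mull; exact: (prod_fupd (fun l => bern (p1 l))).
- by move=> w t; exact: fupd_eq.
- by move=> [[[[[? ?] ?] ?] ?] ?] t; rewrite /updY1 /= fupdK.
Qed.

Lemma expect_indep_Y2 j (g : bool -> R) (h : outcome n m -> R) :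
  (forall w t, h (updY2 w j t) = h w) ->
  E (fun w => g (oY2 w j) * h w) = (\sum_y bern (p2 j) y * g y) * E h.
Proof.
move=> h_upd; apply: (sum_indep_coord (upd := fun w t => updY2 w j t)) => //.
- exact: bern_sum.
- move=> w t; rewrite /weight /=; apply: exchange_mulr.
  by apply: exchange_mull; exact: (prod_fupd (fun l => bern (p2 l))).
- by move=> w t; exact: fupd_eq.
- by move=> [[[[[? ?] ?] ?] ?] ?] t; rewrite /updY2 /= fupdK.
Qed.

Hypothesis pS1 : forall j, \sum_s pS j s = 1.
Hypothesis pS_ge0 : forall j s, 0 <= pS j s.
Hypothesis p1_01 : forall j, 0 <= p1 j <= 1.
Hypothesis p2_01 : forall j, 0 <= p2 j <= 1.
Hypothesis q01 : forall j p, 0 <= q j p <= 1.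

Lemma weight_ge0 w : 0 <= weight pS p1 p2 q w.
Proof.
by rewrite /weight !mulr_ge0 ?invr_ge0 ?ler0n //; apply: prodr_ge0 => *;
  rewrite ?pS_ge0 ?bern_ge0.
Qed.

Lemma expect_le f g : (forall w, f w <= g w) -> E f <= E g.
Proof. by move=> fg; apply: ler_sum => w _; rewrite ler_wpM2l ?weight_ge0. Qed.

Lemma umean_ge0 i j : 0 <= umean pS i j.
Proof. by apply: sumr_ge0 => s _; rewrite mulr_ge0 ?ler0n. Qed.

Lemma expect1 : E (fun=> 1) = 1.
Proof.
have -> : E (fun=> 1) =
    (\sum_(S : {ffun 'I_n -> {ffun 'I_m -> bool}}) \prod_j pS j (S j)) *
    (\sum_(Y : {ffun 'I_n -> bool}) \prod_j bern (p1 j) (Y j)) *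
    (\sum_(Z : {ffun 'I_n * 'I_n -> bool}) \prod_jp bern (q jp.1 jp.2) (Z jp)) *
    (\sum_(s : {perm 'I_n}) (n`!%:R)^-1) *
    (\sum_(Y : {ffun 'I_n -> bool}) \prod_j bern (p2 j) (Y j)) *
    (\sum_(s : {perm 'I_n}) (n`!%:R)^-1).
  by rewrite -!sum_pair_mul; apply: eq_bigr => w _; rewrite mulr1.
have perm1 : \sum_(s : {perm 'I_n}) (n`!%:R : R)^-1 = 1.
  by rewrite sumr_const card_Sn -[_ *+ n`!]mulr_natr mulVf // pnatr_eq0 -lt0n fact_gt0.
by rewrite perm1 sum_ffun_prod1 // !sum_ffun_bern1 !mulr1.
Qed.

Lemma expect_Y1 j : E (fun w => (oY1 w j)%:R) = p1 j.
Proof.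
transitivity (E (fun w => (oY1 w j)%:R * 1)); first by apply: eq_expect => w; rewrite mulr1.
by rewrite (expect_indep_Y1 (fun y => y%:R)) // bern_mean expect1 mulr1.
Qed.

(* Composing the second-chance order with the transposition of a and c
   preserves the weight and swaps the events [before w a c] and [before w c a]. *)
Lemma expect_before a c : a != c -> E (fun w => (before w a c)%:R) = 2^-1.
Proof.
move=> ac.
pose swap (w : outcome n m) : outcome n m := (w.1, (os2 w * tperm a c)%g).
have swapK : involutive swap.
  by case=> w s; rewrite /swap /os2 /=; congr (_, _); apply/permP => l; rewrite !permM tpermK.
have swap_inv w l : (os2 (swap w))^-1%g l = (os2 w)^-1%g (tperm a c l).
  by rewrite /os2 /= invMg permM tpermV.
have sym : E (fun w => (before w a c)%:R) = E (fun w => (before w c a)%:R).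
  rewrite /expect (reindex_inj (inv_inj swapK)); apply: eq_bigr => w _.
  by rewrite /before !swap_inv tpermL tpermR; case: w.
have total : E (fun w => (before w a c)%:R) + E (fun w => (before w c a)%:R) = 1.
  rewrite -expectD -[RHS]expect1; apply: eq_expect => w.
  have : (os2 w)^-1%g a != (os2 w)^-1%g c by rewrite (inj_eq perm_inj).
  by rewrite /before; case: ltngtP => [_ _|_ _|/val_inj ->]; rewrite ?eqxx //= ?add0r ?addr0.
rewrite -sym -mulr2n in total.
by rewrite -[LHS](mulfK (_ : 2 != 0 :> R)) ?pnatr_eq0 // mulr_natr total mul1r.
Qed.

Lemma expect_Y2_notY1 j :
  E (fun w => (oY2 w j)%:R * (1 - (oY1 w j)%:R)) = p2 j * (1 - p1 j).
Proof.
rewrite (expect_indep_Y2 (fun y => y%:R)) // bern_mean.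
by rewrite expectB expect1 expect_Y1.
Qed.

Lemma expect_Y2_first_load j i :
  E (fun w => (oY2 w j)%:R * (first_load b C w i)%:R) =
  p2 j * \sum_l umean pS i l * Pr pS p1 p2 q (ad1 b C l).
Proof.
rewrite (expect_indep_Y2 (fun y => y%:R)) // bern_mean; congr (_ * _).
transitivity (E (fun w => \sum_l (oS w l i)%:R * (ad1 b C l w)%:R)).
  apply: eq_expect => w; rewrite /first_load natr_sum big_mkcond /=; apply: eq_bigr => l _.
  by rewrite /ad1; case: (l \in _); rewrite ?mulr1 ?mulr0.
rewrite expect_sum; apply: eq_bigr => l _.
by rewrite (expect_indep_S (fun s => (s i)%:R)) // => w t; rewrite ad1_updS.
Qed.

Lemma expect_Y2_candidate_load_le j i :
  E (fun w => (oY2 w j)%:R * (candidate_load w j i)%:R) <=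
  p2 j * \sum_l umean pS i l * (p2 l / 2).
Proof.
rewrite (expect_indep_Y2 (fun y => y%:R)) => [|w t]; last first.
  congr (_%:R); apply: eq_bigr => l _.
  have [->|lj] := eqVneq l j; first by rewrite /before ltnn !andbF.
  by rewrite /updY2 {1}/oY2 /= fupd_neq.
rewrite bern_mean ler_wpM2l ?(andP (p2_01 j)).1 //.
have -> : E (fun w => (candidate_load w j i)%:R) =
    \sum_l E (fun w => (oS w l i)%:R * ((oY2 w l)%:R * (before w l j)%:R)).
  rewrite -expect_sum; apply: eq_expect => w; rewrite /candidate_load natr_sum.
  by apply: eq_bigr => l _; rewrite -!natrM !mulnb andbA.
apply: ler_sum => l _; have [->|lj] := eqVneq l j.
  rewrite (eq_expect (g := fun=> 0)) => [|w]; last by rewrite /before ltnn !mulr0.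
  by rewrite expect0 mulr_ge0 ?umean_ge0 ?divr_ge0 ?(andP (p2_01 j)).1.
rewrite (expect_indep_S (fun s => (s i)%:R)) // (expect_indep_Y2 (fun y => y%:R)) //.
by rewrite bern_mean expect_before.
Qed.

Lemma expect_Y2_load_le j i (c : R) (x : 'I_n -> R) : (0 < b i)%N -> 0 <= c ->
    (forall l, Pr pS p1 p2 q (ad1 b C l) + p2 l / 2 = c * x l) ->
    \sum_l umean pS i l * x l <= (b i)%:R ->
  E (fun w => (oY2 w j)%:R * (first_load b C w i + candidate_load w j i)%:R / (b i)%:R) <= p2 j * c.
Proof.
move=> b_gt0 c_ge0 ad1_p2 lp_row.
rewrite (eq_expect (g := fun w => (b i)%:R^-1 * ((oY2 w j)%:R * (first_load b C w i)%:R +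
  (oY2 w j)%:R * (candidate_load w j i)%:R))) => [|w]; last by rewrite natrD mulrDr mulrC.
rewrite expectZ expectD expect_Y2_first_load ler_pdivrMl ?ltr0n //.
apply: le_trans (lerD (lexx _) (expect_Y2_candidate_load_le j i)) _.
rewrite -mulrDr -big_split /= mulrCA ler_wpM2l ?(andP (p2_01 j)).1 //.
under eq_bigr do rewrite -mulrDr ad1_p2 mulrCA.
by rewrite -mulr_sumr mulrC ler_wpM2r.
Qed.

Lemma Pr_ad2_ge j (c : R) (x : 'I_n -> R) : (forall i, 0 < b i)%N -> 0 <= c ->
    (forall l, Pr pS p1 p2 q (ad1 b C l) + p2 l / 2 = c * x l) ->
    (forall i, \sum_l umean pS i l * x l <= (b i)%:R) ->
  p2 j * (1 - p1 j) - p2 j * c * #|C j|%:R <= Pr pS p1 p2 q (ad2 b C j).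
Proof.
move=> b_gt0 c_ge0 ad1_p2 lp_row.
apply: le_trans _ (expect_le (fun w => ad2_indicator_ge C R w j b_gt0)).
rewrite expectB expect_Y2_notY1 expect_sum lerB // -sum1_card natr_sum mulr_sumr.
by apply: ler_sum => i _; rewrite mulr1 (expect_Y2_load_le _ _ (x := x)).
Qed.

End Expectation.

Theorem lemma4 (R : realFieldType) (n m k : nat)
  (b : 'I_m -> nat) (C : 'I_n -> {set 'I_m})
  (pS : 'I_n -> {ffun 'I_m -> bool} -> R) (w : 'I_n -> R)
  (x : 'I_n -> R) (alpha1 beta1 alpha2 : R) (q : 'I_n -> 'I_n -> R) :
  (0 < k)%N ->
  (forall i, (0 < b i)%N) ->
  (forall j, (#|C j| <= k)%N) ->
  (forall j s, 0 <= pS j s) ->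
  (forall j, \sum_(s : {ffun 'I_m -> bool}) pS j s = 1) ->
  (forall j s, pS j s != 0 -> forall i, i \notin C j -> s i = false) ->
  (forall j, 0 <= w j) ->
  lp_optimal pS b w x ->
  0 <= alpha1 -> 0 <= alpha2 -> 0 <= beta1 -> beta1 <= alpha1 * (1 - alpha1 / 2) ->
  (forall j, alpha1 * x j / k%:R <= 1) ->
  (forall j, alpha2 * x j / k%:R <= 1) ->
  (forall j p, 0 <= q j p <= 1) ->
  (forall j, Pr pS (fun j => alpha1 * x j / k%:R) (fun j => alpha2 * x j / k%:R) q
               (ad1 b C j) = beta1 * x j / k%:R) ->
  forall j : 'I_n,
    x j / k%:R * alpha2 * (1 - alpha1 * x j / k%:R - beta1 - alpha2 / 2)
    <= Pr pS (fun j => alpha1 * x j / k%:R) (fun j => alpha2 * x j / k%:R) q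
          (ad2 b C j).
Proof.
move=> k_gt0 b_gt0 Ck pS_ge0 pS1 _ _ [[x01 lp_row] _] a1_ge0 a2_ge0 b1_ge0 _
  p1_le1 p2_le1 q01 Pr_ad1 j.
have k_neq0 : k%:R != 0 :> R by rewrite pnatr_eq0 -lt0n.
have prob01 a l : 0 <= a -> a * x l / k%:R <= 1 -> 0 <= a * x l / k%:R <= 1.
  by case/andP: (x01 l) => x_ge0 _ a_ge0 ->; rewrite andbT !mulr_ge0 ?invr_ge0 ?ler0n.
set c := (beta1 + alpha2 / 2) / k%:R.
have c_ge0 : 0 <= c by rewrite divr_ge0 ?addr_ge0 ?divr_ge0 ?ler0n.
have ad1_p2 l : beta1 * x l / k%:R + alpha2 * x l / k%:R / 2 = c * x l.
  by rewrite /c; field.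
apply: le_trans (Pr_ad2_ge pS1 pS_ge0 (fun l => prob01 _ l a1_ge0 (p1_le1 l))
  (fun l => prob01 _ l a2_ge0 (p2_le1 l)) q01 j b_gt0 c_ge0 _ lp_row); last first.
  by move=> l; rewrite Pr_ad1 ad1_p2.
have Cj_le_k : alpha2 * x j / k%:R * c * #|C j|%:R <= alpha2 * x j / k%:R * c * k%:R.
  have /andP[p2j_ge0 _] := prob01 _ j a2_ge0 (p2_le1 j).
  by rewrite ler_wpM2l ?ler_nat ?Ck //; exact: mulr_ge0.
apply: le_trans (lerB (lexx _) Cj_le_k).
by rewrite le_eqVlt (_ : _ == _) //; apply/eqP; rewrite /c; field.
Qed.
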